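(* Let $R$ be a semifield and let $X,Y,Z$ be $R$-convex sets. If $f:X\times Y\to Z$ is a convex map (where $X\times Y$ carries the product convex structure), then $f$ is biconvex.
   Context: A semifield is a commutative semiring in which every nonzero element is invertible. $D_R$ is the monad on $\mathsf{Set}$ of finitely supported $R$-valued distributions summing to $1$; an $R$-convex set is a $D_R$-algebra $(X,\pi^X)$, and $\sum_i\alpha_ix_i$ denotes $\pi^X$ applied to the formal combination. The product $X\times Y$ is the product in the category of $R$-convex sets, with componentwise convex combinations. A map $f:X\times Y\to Z$ is biconvex if $f(\sum_i\alpha_ix_i,\sum_j\beta_jy_j)=\sum_{i,j}\alpha_i\beta_jf(x_i,y_j)$ for all convex combinations in $X$ and $Y$. *)

From HB Require Import structures.
From mathcomp Require Import all_boot all_algebra.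
From mathcomp Require Import boolp.

Set Implicit Arguments.
Unset Strict Implicit.
Unset Printing Implicit Defensive.

Local Open Scope ring_scope.

Definition semifield (R : comPzSemiRingType) : Prop :=
  forall x : R, x != 0 -> exists y : R, x * y = 1.

Section Dist.
Variable R : comPzSemiRingType.

(* A formal R-combination  sum_i a_i x_i  is represented by a list of pairs
   (a_i, x_i).  It denotes the finitely supported function [weight s]. *)
Definition total (X : Type) (s : seq (R * X)) : R := \sum_(p <- s) p.1.

(* s is an element of D_R X (weights sum to 1) *)
Definition is_dist (X : Type) (s : seq (R * X)) : bool := total s == 1.

Definition weight (X : Type) (s : seq (R * X)) (x : X) : R :=
  \sum_(p <- s | `[< p.2 = x >]) p.1.

(* monad multiplication on representatives: sum_i a_i (sum_j b_ij x_ij)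
   |-> sum_ij a_i b_ij x_ij *)
Definition flat (X : Type) (S : seq (R * seq (R * X))) : seq (R * X) :=
  flatten [seq [seq (p.1 * q.1, q.2) | q <- p.2] | p <- S].

Definition dmap (X Y : Type) (f : X -> Y) (s : seq (R * X)) : seq (R * Y) :=
  [seq (p.1, f p.2) | p <- s].

(* (X, pi) is a D_R-algebra: pi is well defined on D_R X (depends only on
   the denoted distribution), satisfies the unit law and the
   multiplication law. *)
Definition is_algebra (X : Type) (pi : seq (R * X) -> X) : Prop :=
  [/\ forall s t, is_dist s -> is_dist t -> weight s =1 weight t -> pi s = pi t,
      forall x, pi [:: (1, x)] = x
    & forall S : seq (R * seq (R * X)),
        is_dist S -> all (fun p => is_dist p.2) S ->
        pi (flat S) = pi (dmap pi S)].

End Dist.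

Record convex_set (R : comPzSemiRingType) := ConvexSet {
  carrier :> Type;
  cpi : seq (R * carrier) -> carrier;
  cpi_algebra : is_algebra cpi
}.

Definition prod_pi (R : comPzSemiRingType) (X Y : convex_set R)
  (s : seq (R * (X * Y))) : X * Y :=
  (cpi [seq (p.1, p.2.1) | p <- s], cpi [seq (p.1, p.2.2) | p <- s]).

Definition convex_map (R : comPzSemiRingType) (A B : Type)
  (piA : seq (R * A) -> A) (piB : seq (R * B) -> B) (f : A -> B) : Prop :=
  forall s : seq (R * A), is_dist s -> f (piA s) = piB (dmap f s).

Definition biconvex (R : comPzSemiRingType) (X Y Z : convex_set R)
  (f : X * Y -> Z) : Prop :=
  forall (sx : seq (R * X)) (sy : seq (R * Y)), is_dist sx -> is_dist sy ->
    f (cpi sx, cpi sy) =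
    cpi [seq (p.1 * q.1, f (p.2, q.2)) | p <- sx, q <- sy].

(* Their product
   distribution, with weights a_i b_j on the pairs (x_i, y_j), has marginals
   sx and sy, so it is sent by the product structure to (cpi sx, cpi sy).
   Applying convexity of f to it gives exactly the biconvexity identity. *)
From Pilot Require Import Defs.
From mathcomp Require Import all_boot all_algebra.
From mathcomp Require Import boolp.
Import GRing.Theory.

Set Implicit Arguments.
Unset Strict Implicit.
Unset Printing Implicit Defensive.

Local Open Scope ring_scope.

Lemma total_dmap (R : comPzSemiRingType) (A B : Type) (h : A -> B)
    (s : seq (R * A)) :
  Defs.total (dmap h s) = Defs.total s.
Proof. by rewrite /Defs.total big_map. Qed.

Section ProductDistribution.
Variables (R : comPzSemiRingType) (X Y : Type).
Variables (sx : seq (R * X)) (sy : seq (R * Y)).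

Definition pair_comb : seq (R * (X * Y)) :=
  [seq (p.1 * q.1, (p.2, q.2)) | p <- sx, q <- sy].

Lemma total_pair_comb : Defs.total pair_comb = Defs.total sx * Defs.total sy.
Proof.
rewrite /Defs.total big_allpairs_dep mulr_suml.
by apply: eq_bigr => p _; rewrite mulr_sumr.
Qed.

Lemma weight_pair_comb_fst x :
  weight (dmap fst pair_comb) x = weight sx x * Defs.total sy.
Proof.
rewrite /weight big_map big_mkcond /pair_comb big_allpairs_dep /=.
rewrite [in RHS]big_mkcond mulr_suml.
apply: eq_bigr => p _; case: asboolP => _ /=.
- by rewrite mulr_sumr.
- by rewrite mul0r big1.
Qed.

Lemma weight_pair_comb_snd y :
  weight (dmap snd pair_comb) y = Defs.total sx * weight sy y.
Proof.
rewrite /weight big_map big_mkcond /pair_comb big_allpairs_dep /= mulr_suml.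
apply: eq_bigr => p _; rewrite mulr_sumr big_mkcond [RHS]big_mkcond /=.
by apply: eq_bigr => q _; case: asboolP; rewrite ?mulr0.
Qed.

Lemma is_dist_pair_comb : is_dist sx -> is_dist sy -> is_dist pair_comb.
Proof. by move=> /eqP dx /eqP dy; apply/eqP; rewrite total_pair_comb dx dy mulr1. Qed.

End ProductDistribution.

Lemma prod_pi_pair_comb (R : comPzSemiRingType) (X Y : convex_set R)
    (sx : seq (R * X)) (sy : seq (R * Y)) :
  is_dist sx -> is_dist sy -> prod_pi (pair_comb sx sy) = (cpi sx, cpi sy).
Proof.
move=> dx dy; have [wX _ _] := cpi_algebra X; have [wY _ _] := cpi_algebra Y.
have dist_marginal (W : Type) (h : X * Y -> W) :
    is_dist (dmap h (pair_comb sx sy)).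
  by rewrite /is_dist total_dmap; exact: is_dist_pair_comb.
have tx := eqP dx; have ty := eqP dy.
congr pair.
- apply: wX (dist_marginal _ fst) dx _ => x.
  by rewrite weight_pair_comb_fst ty mulr1.
- apply: wY (dist_marginal _ snd) dy _ => y.
  by rewrite weight_pair_comb_snd tx mul1r.
Qed.

Theorem mainTheorem7 (R : comPzSemiRingType) (hR : semifield R)
  (X Y Z : convex_set R) (f : X * Y -> Z) :
  convex_map (@prod_pi R X Y) (@cpi R Z) f -> biconvex f.
Proof.
move=> f_convex sx sy dx dy.
rewrite -prod_pi_pair_comb // f_convex; last exact: is_dist_pair_comb.
by rewrite /dmap /pair_comb map_allpairs.
Qed.
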